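(* Let $(X,\pi)$ be a finite symmetric two-player zero-sum game, i.e. $\pi(x,y)=-\pi(y,x)$ for all $x,y\in X$. Imitation is subject to a money pump in $(X,\pi)$ if and only if $(X,\pi)$ is a generalized rock-paper-scissors game.
   Context: $\pi(x,y)$ is the payoff of the player choosing $x$ against $y$. Relative payoff: $\Delta(x,y)=\pi(x,y)-\pi(y,x)$. Imitate-the-best: given initial $y_0\in X$ and any opponent sequence $(x_t)_{t\ge0}$, $y_t=x_{t-1}$ if $\Delta(x_{t-1},y_{t-1})>0$ and $y_t=y_{t-1}$ otherwise. Imitation is not subject to a money pump if there is $M\in\mathbb{R}_+$ such that for every $y_0\in X$ and every sequence $(x_t)$, $\limsup_{T\to\infty}\sum_{t=0}^T\Delta(x_t,y_t)\le M$; otherwise it is subject to a money pump. A symmetric zero-sum game $(Y,\pi)$ is a generalized rock-paper-scissors matrix if for every $y\in Y$ there is $x\in Y$ with $\pi(x,y)>0$; $(X,\pi)$ is a generalized rock-paper-scissors game if some nonempty $\bar X\subseteq X$ makes $(\bar X,\pi|_{\bar X\times\bar X})$ a generalized rock-paper-scissors matrix. *)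

From HB Require Import structures.
From mathcomp Require Import all_boot all_order all_algebra.
From mathcomp Require Import all_classical all_reals all_analysis.
Set Implicit Arguments. Unset Strict Implicit. Unset Printing Implicit Defensive.
Import Order.TTheory GRing.Theory Num.Theory.
Local Open Scope ring_scope.

Section Game.
Variables (R : realType) (X : finType) (pi : X -> X -> R).

Definition rel_payoff (x y : X) : R := pi x y - pi y x.

Fixpoint imitate (y0 : X) (xs : nat -> X) (t : nat) : X :=
  match t with
  | 0 => y0
  | t'.+1 => let y := imitate y0 xs t' in
             if 0 < rel_payoff (xs t') y then xs t' else y
  end.

Definition cum_rel_payoff (y0 : X) (xs : nat -> X) (T : nat) : R :=
  \sum_(0 <= t < T.+1) rel_payoff (xs t) (imitate y0 xs t).

Definition no_money_pump : Prop :=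
  exists M : R, 0 <= M /\
    forall (y0 : X) (xs : nat -> X),
      (limn_esup (fun T => (cum_rel_payoff y0 xs T)%:E) <= M%:E)%E.

Definition money_pump : Prop := ~ no_money_pump.

Definition grps_matrix (Xbar : {set X}) : Prop :=
  forall y, y \in Xbar -> exists2 x, x \in Xbar & 0 < pi x y.

Definition grps_game : Prop :=
  exists Xbar : {set X}, Xbar != finset.set0 /\ grps_matrix Xbar.

End Game.

From HB Require Import structures.
From mathcomp Require Import all_boot all_order all_algebra.
From mathcomp Require Import all_classical all_reals all_analysis.
From mathcomp Require Import lra.
Set Implicit Arguments. Unset Strict Implicit. Unset Printing Implicit Defensive.
Import Order.TTheory GRing.Theory Num.Theory.
Local Open Scope ring_scope.

(* If some nonempty set of strategies has no undominated element, the opponent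
   keeps playing a strategy that beats the current one; imitation switches every
   round and loses at least the least positive relative payoff on that set each
   time, so the cumulative loss grows linearly.  Otherwise every nonempty set has
   an undominated element, and peeling these off ranks the strategies so that a
   winner always has a strictly smaller rank than the strategy it beats.  As
   imitation only switches to winners, the rank of the imitator's strategy, scaled
   by the largest relative payoff, is a nonnegative potential that pays for every
   positive payoff, which bounds the cumulative payoff. *)

Section LimsupBounds.
Variable R : realType.

Lemma limn_esup_le_bound (u : nat -> R) (M : R) : (forall n, u n <= M) ->
  (limn_esup (fun n => (u n)%:E) <= M%:E)%E.
Proof.
move=> le_uM; rewrite limn_esup_lim; apply: lime_le; first exact: is_cvg_esups.
by apply: nearW => n /=; apply: ge_ereal_sup => _ [k _ <-]; rewrite lee_fin.
Qed.

Lemma limn_esup_linear_not_le (u : nat -> R) (c M : R) : 0 < c ->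
  (forall n, n.+1%:R * c <= u n) -> ~ (limn_esup (fun n => (u n)%:E) <= M%:E)%E.
Proof.
move=> c_gt0 u_ge; rewrite limn_esup_lim leNgt => /negP; apply.
set K := Num.truncn (M / c).
have M_lt : M < K.+1%:R * c by rewrite -ltr_pdivrMr // truncnS_gt.
apply: (@lt_le_trans _ _ (K.+1%:R * c)%:E); first by rewrite lte_fin.
apply: lime_ge; first exact: is_cvg_esups.
apply: nearW => n /=; apply: le_ereal_sup_tmp; exists (u (n + K)%N)%:E.
  by exists (n + K)%N => //=; rewrite leq_addr.
rewrite lee_fin; apply: le_trans (u_ge _).
by rewrite ler_pM2r // ler_nat ltnS leq_addl.
Qed.

End LimsupBounds.

Section Imitation.
Variables (R : realType) (X : finType) (pi : X -> X -> R).

Lemma cum_rel_payoff_le_potential (phi : X -> R) :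
  (forall x y, 0 < rel_payoff pi x y -> rel_payoff pi x y <= phi y - phi x) ->
  (forall y, 0 <= phi y) ->
  forall y0 xs T, cum_rel_payoff pi y0 xs T <= phi y0.
Proof.
move=> phi_pays phi_ge0 y0 xs T.
pose p t := - phi (imitate pi y0 xs t).
have step t : rel_payoff pi (xs t) (imitate pi y0 xs t) <= p t.+1 - p t.
  rewrite /p /=; case: ifP => [/phi_pays|]; first lra.
  by rewrite subrr => /negbT; rewrite -leNgt.
apply: le_trans (ler_sum _ (fun t _ => step t)) _.
by rewrite telescope_sumr // /p opprK addrC lerBlDr lerDl phi_ge0.
Qed.

Lemma undominated_exists : ~ grps_game pi ->
  forall Y : {set X}, Y != finset.set0 ->
  exists2 y, y \in Y & forall x, x \in Y -> ~~ (0 < pi x y).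
Proof.
move=> no_grps Y Y_n0; apply/not_notP => no_undom; apply: no_grps.
exists Y; split=> // y yY; apply/not_notP => not_beaten; apply: no_undom.
by exists y => // x xY; apply/negP => pxy; apply: not_beaten; exists x.
Qed.

Lemma beat_ranking_on : ~ grps_game pi -> forall n (Y : {set X}), #|Y| = n ->
  exists r : X -> nat, (forall y, r y <= n)%N /\
    {in Y &, forall x y, 0 < pi x y -> (r x < r y)%N}.
Proof.
move=> no_grps; elim=> [|n IH] Y cardY.
  exists (fun=> 0%N); split=> // x y.
  by move/eqP: cardY; rewrite cards_eq0 => /eqP->; rewrite inE.
have [|ys ysY ys_undom] := undominated_exists no_grps (Y := Y).
  by rewrite -card_gt0 cardY.
have [|r [r_le r_lt]] := IH (Y :\ ys).
  by move: (cardsD1 ys Y); rewrite ysY cardY add1n => -[].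
exists (fun y => if y == ys then 0%N else (r y).+1); split.
  by move=> y; case: eqP => // _; rewrite ltnS.
move=> x y xY yY pxy; have [y_ys|y_ys] := eqVneq y ys.
  by move: (ys_undom x xY); rewrite -y_ys pxy.
have [//|x_ys] := eqVneq x ys.
by rewrite ltnS r_lt // !inE ?x_ys ?y_ys.
Qed.

Lemma beat_ranking : ~ grps_game pi ->
  exists r : X -> nat, (forall y, r y <= #|X|)%N /\
    forall x y, 0 < pi x y -> (r x < r y)%N.
Proof.
move=> no_grps; have [r [r_le r_lt]] := beat_ranking_on no_grps (erefl #|[set: X]|).
by exists r; split=> [y|x y]; [rewrite -cardsT | apply: r_lt; rewrite inE].
Qed.

Hypothesis zero_sum : forall x y, pi x y = - pi y x.

Lemma rel_payoffE x y : rel_payoff pi x y = pi x y *+ 2.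
Proof. by rewrite /rel_payoff (zero_sum y x) opprK mulr2n. Qed.

Lemma rel_payoff_gt0 x y : (0 < rel_payoff pi x y) = (0 < pi x y).
Proof. by rewrite rel_payoffE pmulrn_lgt0. Qed.

Lemma no_grps_no_money_pump : ~ grps_game pi -> no_money_pump pi.
Proof.
move=> /beat_ranking [r [r_le r_lt]].
pose B := \big[Order.max/0]_x \big[Order.max/0]_y rel_payoff pi x y.
have B_ge0 : 0 <= B by apply: bigmax_ge_id.
have le_B x y : rel_payoff pi x y <= B.
  by apply: le_trans (le_bigmax _ _ x); apply: (le_bigmax _ (rel_payoff pi x)).
exists (B * #|X|%:R); split=> [|y0 xs]; first by rewrite mulr_ge0.
have phi_pays x y : 0 < rel_payoff pi x y ->
    rel_payoff pi x y <= B * (r y)%:R - B * (r x)%:R.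
  move=> Dxy; apply: (le_trans (le_B x y)); rewrite -mulrBr ler_peMr //.
  by rewrite lerBrDr addrC natr1 ler_nat r_lt // -rel_payoff_gt0.
apply: limn_esup_le_bound => T.
have phi_ge0 y : 0 <= B * (r y)%:R by rewrite mulr_ge0.
apply: le_trans (cum_rel_payoff_le_potential phi_pays phi_ge0 y0 xs T) _.
by rewrite ler_wpM2l // ler_nat.
Qed.

Section Pump.
Variable Xb : {set X}.
Hypothesis Xb_grps : grps_matrix pi Xb.

Definition beater (y : X) : X := odflt y [pick x in Xb | 0 < pi x y].

Lemma beater_spec y : y \in Xb -> beater y \in Xb /\ 0 < pi (beater y) y.
Proof.
move=> yXb; rewrite /beater; case: pickP => [x /andP[-> ->] //|none].
by have [x xXb pxy] := Xb_grps yXb; move: (none x); rewrite xXb pxy.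
Qed.

Lemma iter_beater_in y0 t : y0 \in Xb -> iter t beater y0 \in Xb.
Proof. by move=> y0Xb; elim: t => //= t /beater_spec[]. Qed.

Lemma imitate_beaters y0 t : y0 \in Xb ->
  imitate pi y0 (fun s => beater (iter s beater y0)) t = iter t beater y0.
Proof.
move=> y0Xb; elim: t => //= t ->.
by have [_] := beater_spec (iter_beater_in t y0Xb); rewrite -rel_payoff_gt0 => ->.
Qed.

Lemma grps_matrix_money_pump : Xb != finset.set0 -> money_pump pi.
Proof.
case/set0Pn=> y0 y0Xb [M [_ bounded]].
pose xs s := beater (iter s beater y0).
pose c := \big[Order.min/1]_(y in Xb) rel_payoff pi (beater y) y.
have c_gt0 : 0 < c.
  apply/bigmin_gtP; split=> // y /beater_spec[_].
  by rewrite -rel_payoff_gt0.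
apply: (limn_esup_linear_not_le c_gt0 _ (bounded y0 xs)) => n.
apply: le_trans (_ : \sum_(0 <= t < n.+1) c <= _).
  by rewrite sumr_const_nat subn0 mulr_natl.
apply: ler_sum => t _; rewrite imitate_beaters //.
exact: bigmin_le_cond (iter_beater_in t y0Xb).
Qed.

End Pump.

End Imitation.

Theorem corollary2 (R : realType) (X : finType) (pi : X -> X -> R)
  (zero_sum : forall x y, pi x y = - pi y x) :
  money_pump pi <-> grps_game pi.
Proof.
split=> [pump|[Xb [Xb_n0 Xb_grps]]].
  by apply/not_notP => no_grps; apply/pump/no_grps_no_money_pump.
exact: grps_matrix_money_pump Xb_grps Xb_n0.
Qed.
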